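(* Let $G$ be an abelian group and $\precsim$ a total quasi-order on $G$. Then $\precsim$ is compatible with $+$ (i.e. $(G,\precsim)$ satisfies $(Q_1)$ and $(Q_2)$ below) if and only if $G$ admits a subgroup $H$ satisfying: (1) $H$ is an initial segment of $(G,\precsim)$; (2) the restriction of $\precsim$ to $H$ makes $H$ an ordered abelian group (i.e. it is antisymmetric on $H$ and $x\precsim y\Rightarrow x+z\precsim y+z$ for all $x,y,z\in H$); (3) there exists a valuation $v$ on $G$ such that $v(h)>v(g)$ for all $h\in H$ and $g\in G\setminus H$, and such that for all $g,h\in G\setminus H$ we have $g\precsim h\Leftrightarrow v(g)\geq v(h)$.
   Context: A quasi-order is a reflexive transitive binary relation; it is total if any two elements are comparable. Write $a\sim b$ for $a\precsim b\wedge b\precsim a$. Compatibility axioms: $(Q_1)$ for all $x$, $x\sim 0\Rightarrow x=0$; $(Q_2)$ for all $x,y,z$, if $x\precsim y$ and $y\not\sim z$ then $x+z\precsim y+z$. A subset $S\subseteq G$ is an initial segment if $s\in S$ and $a\precsim s$ imply $a\in S$. A valuation on an abelian group $G$ is a map $v:G\to\Gamma\cup\{\infty\}$, where $\Gamma$ is a totally ordered set and $\gamma<\infty$ for all $\gamma\in\Gamma$, such that $v(g)=\infty\Leftrightarrow g=0$, $v(g+h)\geq\min(v(g),v(h))$, and $v(-g)=v(g)$ for all $g,h\in G$. *)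

From HB Require Import structures.
From mathcomp Require Import all_boot all_order all_algebra.
Set Implicit Arguments. Unset Strict Implicit. Unset Printing Implicit Defensive.
Import Order.TTheory GRing.Theory.
Local Open Scope ring_scope.

Section QO.
Variable G : zmodType.
Variable le : G -> G -> Prop.

Definition quasi_order := (forall x, le x x) /\ (forall x y z, le x y -> le y z -> le x z).
Definition total_rel := forall x y, le x y \/ le y x.
Definition sim (a b : G) := le a b /\ le b a.

Definition Q1 := forall x : G, sim x 0 -> x = 0.
Definition Q2 := forall x y z : G, le x y -> ~ sim y z -> le (x + z) (y + z).

Definition is_subgroup (H : G -> Prop) :=
  H 0 /\ forall x y, H x -> H y -> H (x - y).

Definition initial_segment (S : G -> Prop) :=
  forall s a, S s -> le a s -> S a.

Definition ordered_on (H : G -> Prop) :=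
  (forall x y, H x -> H y -> le x y -> le y x -> x = y) /\
  (forall x y z, H x -> H y -> H z -> le x y -> le (x + z) (y + z)).
End QO.

(* Gamma ∪ {∞} is modelled as option Gamma, None = ∞ (the top element). *)
Definition vle {d} {Gam : orderType d} (a b : option Gam) : bool :=
  match a, b with
  | _, None => true
  | None, Some _ => false
  | Some x, Some y => (x <= y)%O
  end.
Definition vlt {d} {Gam : orderType d} (a b : option Gam) : bool := ~~ vle b a.

Definition valuation (G : zmodType) {d} {Gam : orderType d} (v : G -> option Gam) :=
  (forall g, v g = None <-> g = 0) /\
  (forall g h, vle (v g) (v (g + h)) || vle (v h) (v (g + h))) /\
  (forall g, v (- g) = v g).

(* If (Q1) and (Q2) hold, H := {x | x ≲ 0 or -x ≲ 0} is a subgroup and an initial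
   segment on which ≲ is antisymmetric and translation invariant; every g outside H
   satisfies 0 ≲ g and g ~ -g, and g + h ≲ max(g, h) whenever g, h and g + h all
   lie outside H.  Hence g ↦ (~-class of g), with classes ordered by the reverse
   of ≲, is a valuation once H \ {0} is sent to the class of 0 (which lies above
   every class outside H) and 0 to ∞.
   Conversely, given H and v, (Q2) reduces by cases to v(y + z) = min(v y, v z),
   which holds because y ≁ z forces v y ≠ v z. *)

From HB Require Import structures.
From mathcomp Require Import all_boot all_order all_algebra.
From mathcomp Require Import boolp.
Set Implicit Arguments. Unset Strict Implicit. Unset Printing Implicit Defensive.
Import Order.TTheory GRing.Theory.
Local Open Scope ring_scope.
Local Open Scope quotient_scope.

Section SimClasses.
Variables (G : zmodType) (le : G -> G -> Prop).
Hypothesis hqo : quasi_order le.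

Lemma sim_refl x : sim le x x.
Proof. by split; apply: hqo.1. Qed.

Lemma sim_sym x y : sim le x y -> sim le y x.
Proof. by case. Qed.

Lemma sim_trans x y z : sim le x y -> sim le y z -> sim le x z.
Proof. by case=> h1 h2 [h3 h4]; split; [apply: hqo.2 h3|apply: hqo.2 h2]. Qed.

Definition simb x y := `[< sim le x y >].

Lemma simb_refl : reflexive simb.
Proof. by move=> x; apply/asboolP/sim_refl. Qed.
Lemma simb_sym : symmetric simb.
Proof. by move=> x y; apply/asboolP/asboolP => /sim_sym. Qed.
Lemma simb_trans : transitive simb.
Proof. by move=> y x z /asboolP h1 /asboolP h2; apply/asboolP/(sim_trans h1). Qed.

Definition sim_equiv := EquivRel simb simb_refl simb_sym simb_trans.
End SimClasses.

Definition sim_class (G : zmodType) (le : G -> G -> Prop)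
  (hqo : quasi_order le) (htot : total_rel le) := {eq_quot sim_equiv hqo}.
HB.instance Definition _ G le hqo htot := Choice.on (@sim_class G le hqo htot).

Section SimClassOrder.
Variables (G : zmodType) (le : G -> G -> Prop).
Hypotheses (hqo : quasi_order le) (htot : total_rel le).
Local Notation cls := (sim_class hqo htot).

Definition class_of (x : G) : cls := \pi_cls x.

Lemma class_ofP x y : reflect (class_of x = class_of y) `[< sim le x y >].
Proof. exact: eqmodP. Qed.

Lemma class_of_eq x y : sim le x y -> class_of x = class_of y.
Proof. by move=> /asboolP/class_ofP. Qed.

Lemma sim_repr (x : G) : sim le (repr (class_of x)) x.
Proof. by apply/asboolP/class_ofP; rewrite /class_of reprK. Qed.

(* Reversed, so that larger elements get smaller values. *)
Definition class_le (a b : cls) := `[< le (repr b) (repr a) >].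

Lemma class_le_anti : antisymmetric class_le.
Proof.
move=> a b /andP[/asboolP h1 /asboolP h2]; rewrite -[a]reprK -[b]reprK.
exact: (class_of_eq (conj h2 h1)).
Qed.

Lemma class_le_trans : transitive class_le.
Proof. by move=> b a c /asboolP h1 /asboolP h2; apply/asboolP; apply: hqo.2 h2 h1. Qed.

Lemma class_le_total : total class_le.
Proof.
by move=> a b; case: (htot (repr a) (repr b)) => h; apply/orP; [right|left]; apply/asboolP.
Qed.

End SimClassOrder.

HB.instance Definition _ G le hqo htot :=
  Order.isOrder.Build (Order.Disp tt tt) (@sim_class G le hqo htot)
   (fun _ _ => erefl) (fun _ _ => erefl) (fun _ _ => erefl)
   (@class_le_anti G le hqo htot) (@class_le_trans G le hqo htot) (@class_le_total G le hqo htot).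

Lemma class_of_leP (G : zmodType) (le : G -> G -> Prop)
  (hqo : quasi_order le) (htot : total_rel le) (x y : G) :
  reflect (le y x) (@class_of G le hqo htot x <= class_of hqo htot y)%O.
Proof.
have [s1 s2] := sim_repr hqo htot x; have [s3 s4] := sim_repr hqo htot y.
apply: (iffP idP) => [/asboolP h|h]; last apply/asboolP.
  exact: hqo.2 _ _ _ s4 (hqo.2 _ _ _ h s1).
exact: hqo.2 _ _ _ s3 (hqo.2 _ _ _ h s2).
Qed.

Section OptionOrder.
Variables (d : Order.disp_t) (Gam : orderType d).
Implicit Types a b c : option Gam.

Lemma vle_refl a : vle a a.
Proof. by case: a => //= x; rewrite lexx. Qed.

Lemma vle_trans a b c : vle a b -> vle b c -> vle a c.
Proof. by case: a; case: b; case: c => //= x y z; apply: le_trans. Qed.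

Lemma vle_total a b : vle a b || vle b a.
Proof. by case: a; case: b => //= x y; apply: le_total. Qed.

Lemma vle_anti a b : vle a b -> vle b a -> a = b.
Proof. by case: a; case: b => //= x y h1 h2; rewrite (@le_anti _ _ x y) ?h1 ?h2. Qed.

Lemma vltW a b : vlt a b -> vle a b.
Proof. by move/negPf=> h; move: (vle_total a b); rewrite h orbF. Qed.

Lemma vltxx a : ~~ vlt a a.
Proof. by rewrite /vlt vle_refl. Qed.

Lemma vlt_neq a b : vlt a b -> a <> b.
Proof. by move=> + eab; rewrite eab (negPf (vltxx b)). Qed.

Lemma vle_vlt_false a b : vle a b -> vlt b a -> False.
Proof. by rewrite /vlt => ->. Qed.

End OptionOrder.

Section ValuationTheory.
Variables (G : zmodType) (d : Order.disp_t) (Gam : orderType d).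
Variables (v : G -> option Gam) (hv : valuation v).

Lemma valuationD_ge c a b : vle c (v a) -> vle c (v b) -> vle c (v (a + b)).
Proof.
by move=> ha hb; case/orP: (hv.2.1 a b) => h; [apply: vle_trans ha h|apply: vle_trans hb h].
Qed.

Lemma valuationD_eq a b : vlt (v b) (v a) -> v (a + b) = v b.
Proof.
move=> hba; apply: vle_anti; last by apply: valuationD_ge; [apply: vltW|apply: vle_refl].
case/orP: (hv.2.1 (a + b) (- a)); rewrite [a + b - a]addrC addKr ?hv.2.2 // => hab.
by case: (vle_vlt_false hab hba).
Qed.

Lemma valuationD_le_min a b : v a <> v b -> vle (v (a + b)) (v a) /\ vle (v (a + b)) (v b).
Proof.
move=> hab; case/orP: (vle_total (v a) (v b)) => h.
  have hba : vlt (v a) (v b) by apply/negP => h'; apply: hab; apply: vle_anti.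
  by rewrite addrC valuationD_eq // vle_refl.
have hab' : vlt (v b) (v a) by apply/negP => h'; apply: hab; apply: vle_anti.
by rewrite valuationD_eq // vle_refl.
Qed.

End ValuationTheory.

Section Subgroup.
Variables (G : zmodType) (H : G -> Prop).
Hypothesis hsub : is_subgroup H.

Lemma subgroupN x : H x -> H (- x).
Proof. by move=> hx; rewrite -sub0r; apply: hsub.2 => //; apply: hsub.1. Qed.

Lemma subgroupD x y : H x -> H y -> H (x + y).
Proof. by move=> hx hy; rewrite -[y]opprK; apply: hsub.2 => //; apply: subgroupN. Qed.

Lemma subgroupDl_notin x z : H x -> ~ H z -> ~ H (x + z).
Proof.
by move=> hx hz hxz; apply: hz; rewrite -(addKr x z); apply: subgroupD (subgroupN hx) hxz.
Qed.

End Subgroup.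

Section Sufficiency.
Variables (G : zmodType) (le : G -> G -> Prop) (H : G -> Prop).
Hypotheses (htot : total_rel le) (hsub : is_subgroup H).
Hypotheses (hinit : initial_segment le H) (hord : ordered_on le H).
Variables (d : Order.disp_t) (Gam : orderType d) (v : G -> option Gam).
Hypotheses (hv : valuation v) (hHv : forall h g, H h -> ~ H g -> vlt (v g) (v h)).
Hypothesis hcmp : forall g h, ~ H g -> ~ H h -> (le g h <-> vle (v h) (v g)).

Lemma vle_of_le x y : ~ H y -> le x y -> vle (v y) (v x).
Proof.
move=> hy hxy; have [hx|hx] := pselect (H x); first exact/vltW/hHv.
exact/hcmp.
Qed.

Lemma le_of_vle x y : ~ H y -> vle (v y) (v x) -> le x y.
Proof.
move=> hy hyx; have [hx|hx] := pselect (H x); last exact/hcmp.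
by case: (htot x y) => // hyx'; case: hy; apply: hinit hyx'.
Qed.

Lemma notin_addr_vneq x z : ~ H x -> v x <> v z -> ~ H (x + z).
Proof.
move=> hx hxz hH; have [hle _] := valuationD_le_min hv hxz.
exact: vle_vlt_false hle (hHv hH hx).
Qed.

Lemma sufficient_Q1 : Q1 le.
Proof.
move=> x [h1 h2]; have h0 := hsub.1.
exact: hord.1 (hinit h0 h1) h0 h1 h2.
Qed.

Lemma sufficient_Q2 : Q2 le.
Proof.
move=> x y z hxy hyz; have [hy|hy] := pselect (H y).
  have hx := hinit hy hxy; have [hz|hz] := pselect (H z); first exact: hord.2.
  apply: le_of_vle; first exact: subgroupDl_notin.
  by rewrite !valuationD_eq ?vle_refl //; apply: hHv.
have hvyz : v y <> v z.
  have [hz|hz] := pselect (H z); first exact/vlt_neq/hHv.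
  by move=> e; apply: hyz; split; apply/hcmp => //; rewrite e vle_refl.
apply: le_of_vle; first exact: notin_addr_vneq.
have [hy_yz hz_yz] := valuationD_le_min hv hvyz.
by apply: valuationD_ge => //; apply: vle_trans hy_yz (vle_of_le hy hxy).
Qed.

End Sufficiency.

Section Necessity.
Variables (G : zmodType) (le : G -> G -> Prop).
Hypotheses (hqo : quasi_order le) (htot : total_rel le) (q1 : Q1 le) (q2 : Q2 le).

Let trans : forall x y z, le x y -> le y z -> le x z := hqo.2.

Definition zero_segment (x : G) := le x 0 \/ le (- x) 0.

Lemma zero_segment0 : zero_segment 0.
Proof. by left; apply: hqo.1. Qed.

Lemma zero_segmentN x : zero_segment x -> zero_segment (- x).
Proof. by rewrite /zero_segment opprK => -[h|h]; [right|left]. Qed.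

Lemma nsim0 x : x != 0 -> ~ sim le 0 x.
Proof. by move=> /eqP hx [h1 h2]; apply: hx; apply: q1. Qed.

Lemma le0_oppr x : le x 0 -> le 0 (- x).
Proof.
have [->|hx0] := eqVneq x 0; first by rewrite oppr0.
move=> hx; have hnx : - x != 0 by rewrite oppr_eq0.
by have := q2 hx (nsim0 hnx); rewrite subrr add0r.
Qed.

Lemma le0D x y : le x 0 -> le y 0 -> le (x + y) 0.
Proof.
move=> hx hy; have [->|hy0] := eqVneq y 0; first by rewrite addr0.
by apply: trans hy; have := q2 hx (nsim0 hy0); rewrite add0r.
Qed.

Lemma zero_segment_nsimN y : zero_segment y -> y != 0 -> ~ sim le y (- y).
Proof.
move=> [hy|hy] hy0 [h1 h2].
  have e : - y = 0 by apply: q1; split; [exact: trans h2 hy|exact: le0_oppr].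
  by move: hy0; rewrite -oppr_eq0 e eqxx.
have e : y = 0 by apply: q1; split; [exact: trans h1 hy|rewrite -[y]opprK; exact: le0_oppr].
by move: hy0; rewrite e eqxx.
Qed.

Lemma zero_segmentD_le0_leN0 x y : le x 0 -> le (- y) 0 -> zero_segment (x + y).
Proof.
move=> hx hy; have [->|hx0] := eqVneq x 0; first by rewrite add0r; right.
have [->|hy0] := eqVneq y 0; first by rewrite addr0; left.
case: (htot y (- x)) => h.
  have hs : ~ sim le (- x) x.
    by rewrite -{2}[x]opprK; apply: zero_segment_nsimN; [right; rewrite opprK|rewrite oppr_eq0].
  by left; have := q2 h hs; rewrite addNr addrC.
have hs : ~ sim le y (- y) by apply: zero_segment_nsimN => //; right.
by right; have := q2 h hs; rewrite subrr opprD addrC.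
Qed.

Lemma zero_segmentD x y : zero_segment x -> zero_segment y -> zero_segment (x + y).
Proof.
move=> [hx|hx] [hy|hy].
- by left; apply: le0D.
- exact: zero_segmentD_le0_leN0.
- by rewrite addrC; apply: zero_segmentD_le0_leN0.
- by right; rewrite opprD; apply: le0D.
Qed.

Lemma zero_segment_subgroup : is_subgroup zero_segment.
Proof.
by split=> [|x y hx hy]; [exact: zero_segment0|apply: zero_segmentD hx (zero_segmentN hy)].
Qed.

Lemma zero_segment_initial : initial_segment le zero_segment.
Proof.
move=> s a hs ha; have [hs0|hs0] := pselect (le s 0); first by left; exact: trans ha hs0.
have hs' : le (- s) 0 by case: hs.
have hn : ~ sim le s (- s) by move=> [h1 _]; apply: hs0; exact: trans h1 hs'.
have := q2 ha hn; rewrite subrr => h.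
by rewrite -(subrK s a); apply: zero_segmentD => //; left.
Qed.

Lemma zero_segment_anti x y :
  zero_segment x -> zero_segment y -> le x y -> le y x -> x = y.
Proof.
move=> hx hy h1 h2; have [e|hy0] := eqVneq y 0; first by rewrite e in h1 h2 *; apply: q1.
have hn := zero_segment_nsimN hy hy0.
have hn' : ~ sim le x (- y).
  by move=> [h3 h4]; apply: hn; split; [exact: trans h2 h3|exact: trans h4 h1].
have := q2 h1 hn; have := q2 h2 hn'; rewrite subrr => k2 k1.
by apply/eqP; rewrite -subr_eq0; apply/eqP; apply: q1.
Qed.

Lemma zero_segment_addrr x y :
  zero_segment x -> zero_segment y -> le x y -> le (x + y) (y + y).
Proof.
move=> hx hy; have [->|hy0] := eqVneq y 0; first by rewrite !addr0.
move=> hxy; have [hyx|hyx] := pselect (le y x).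
  by rewrite (zero_segment_anti hx hy hxy hyx); apply: hqo.1.
(* (Q2) fails to apply only when x + y ~ -y; then x = -2y and 3y = 0, so x + y = 2y. *)
apply: contrapT => hn.
have hle : le (y + y) (x + y) by case: (htot (x + y) (y + y)).
have hns := zero_segment_nsimN hy hy0.
have [hs|hs] := pselect (sim le (x + y) (- y)); last first.
  by apply: hyx; have := q2 hle hs; rewrite !addrK.
have e : x + y = - y.
  by case: hs; apply: zero_segment_anti; [apply: zero_segmentD|apply: zero_segmentN].
have ex : x = - (y + y) by rewrite -(addrK y x) e opprD.
rewrite e in hle hn.
have hns' : ~ sim le (- y) y by move=> [a b]; apply: hns.
have := q2 hle hns'; rewrite addNr => k1.
have := q2 hxy hns; rewrite subrr ex -opprD => k2.
have /eqP : y + y + y = 0 by apply: q1; split => //; rewrite -[_ + y]opprK; apply: le0_oppr.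
by rewrite addr_eq0 => /eqP e3; apply: hn; rewrite e3; apply: hqo.1.
Qed.

Lemma zero_segment_ordered : ordered_on le zero_segment.
Proof.
split=> [|x y z hx hy hz hxy]; first exact: zero_segment_anti.
have [hyz|hyz] := pselect (sim le y z); last exact: q2.
have e : y = z by case: hyz; apply: zero_segment_anti.
by rewrite -e; apply: zero_segment_addrr.
Qed.

Lemma sim_oppr_outside g : ~ zero_segment g -> sim le g (- g).
Proof.
move=> hg; apply: contrapT => hn.
have h0 : le 0 g by case: (htot g 0) => // h; case: hg; left.
by apply: hg; right; have := q2 h0 hn; rewrite subrr sub0r.
Qed.

Lemma outside_gt0 g : ~ zero_segment g -> le 0 g /\ ~ le g 0.
Proof.
move=> hg; have hg0 : ~ le g 0 by move=> h; apply: hg; left.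
by split => //; case: (htot g 0).
Qed.

Lemma outside_neq0 g : ~ zero_segment g -> g != 0.
Proof. by move=> hg; apply/eqP => e; apply: hg; rewrite e; apply: zero_segment0. Qed.

Lemma outside_addr_le g h : ~ zero_segment g -> zero_segment h -> le (g + h) g.
Proof.
move=> hg [hh|hh].
  by have := q2 hh (nsim0 (outside_neq0 hg)); rewrite add0r addrC.
have hgh : ~ zero_segment (g + h).
  by move=> k; apply: hg; rewrite -(addrK h g); apply: zero_segmentD => //; left.
have hng0 : - g != 0 by rewrite oppr_eq0; apply: outside_neq0.
have := q2 hh (nsim0 hng0); rewrite add0r addrC -opprD => k.
exact: trans (sim_oppr_outside hgh).1 (trans k (sim_oppr_outside hg).2).
Qed.

Lemma outside_addr_le_outside g h : ~ zero_segment g -> ~ zero_segment h ->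
  ~ zero_segment (g + h) -> le g h -> le (g + h) h.
Proof.
move=> hg hh hgh hgh'; apply: contrapT => hn.
have hle : le h (g + h) by case: (htot (g + h) h).
have [s1 s2] := sim_oppr_outside hgh.
have hn' : ~ sim le (- (g + h)) h by move=> [a _]; apply: hn; exact: trans s1 a.
have := q2 (trans hgh' (trans hle s1)) hn'; rewrite opprD addrNK => k.
by apply: hn; exact: trans k (trans (sim_oppr_outside hg).2 hgh').
Qed.

Definition class_valuation (x : G) : option (sim_class hqo htot) :=
  if x == 0 then None
  else if `[< zero_segment x >] then Some (class_of hqo htot 0)
  else Some (class_of hqo htot x).

Lemma class_valuation_in x :
  x != 0 -> zero_segment x -> class_valuation x = Some (class_of hqo htot 0).
Proof. by move=> /negPf hx0 hx; rewrite /class_valuation hx0; case: asboolP. Qed.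

Lemma class_valuation_notin x :
  ~ zero_segment x -> class_valuation x = Some (class_of hqo htot x).
Proof. by move=> hx; rewrite /class_valuation (negPf (outside_neq0 hx)); case: asboolP. Qed.

Lemma class_valuation0 : class_valuation 0 = None.
Proof. by rewrite /class_valuation eqxx. Qed.

Lemma class_valuation_eqNone x : class_valuation x = None <-> x = 0.
Proof.
split=> [|->]; last exact: class_valuation0.
by rewrite /class_valuation; case: eqP => // _; case: asboolP.
Qed.

Lemma class_valuationN x : class_valuation (- x) = class_valuation x.
Proof.
have [->|hx0] := eqVneq x 0; first by rewrite oppr0.
have [hx|hx] := pselect (zero_segment x).
  by rewrite !class_valuation_in ?oppr_eq0 //; apply: zero_segmentN.
have hNx : ~ zero_segment (- x) by move=> k; apply: hx; rewrite -[x]opprK; apply: zero_segmentN.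
rewrite !class_valuation_notin //; congr Some; apply: class_of_eq.
by have [] := sim_oppr_outside hx.
Qed.

Lemma class_valuation_ultra g h :
  vle (class_valuation g) (class_valuation (g + h)) ||
  vle (class_valuation h) (class_valuation (g + h)).
Proof.
have [e|ne] := eqVneq (g + h) 0.
  by rewrite e class_valuation0; case: (class_valuation g).
have [->|ng] := eqVneq g 0; first by rewrite add0r vle_refl orbT.
have [->|nh] := eqVneq h 0; first by rewrite addr0 vle_refl.
have [hgh|hgh] := pselect (zero_segment (g + h)).
  rewrite (class_valuation_in ne hgh); have [hg|hg] := pselect (zero_segment g).
    by rewrite (class_valuation_in ng hg) /= lexx.
  rewrite class_valuation_notin //=; apply/orP; left.
  by apply/class_of_leP; apply: (outside_gt0 hg).1.
rewrite (class_valuation_notin hgh).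
have [hg|hg] := pselect (zero_segment g); have [hh|hh] := pselect (zero_segment h).
- by case: hgh; apply: zero_segmentD.
- rewrite (class_valuation_notin hh) /=; apply/orP; right.
  by apply/class_of_leP; rewrite addrC; apply: outside_addr_le.
- rewrite (class_valuation_notin hg) /=; apply/orP; left.
  by apply/class_of_leP; apply: outside_addr_le.
rewrite !class_valuation_notin //=; apply/orP; case: (htot g h) => k.
  by right; apply/class_of_leP; apply: outside_addr_le_outside.
by left; apply/class_of_leP; rewrite addrC; apply: outside_addr_le_outside; rewrite // addrC.
Qed.

Lemma class_valuation_valuation : valuation class_valuation.
Proof.
split; first exact: class_valuation_eqNone.
by split; [exact: class_valuation_ultra|exact: class_valuationN].
Qed.

Lemma class_valuation_lt h g : zero_segment h -> ~ zero_segment g ->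
  vlt (class_valuation g) (class_valuation h).
Proof.
move=> hh hg; rewrite (class_valuation_notin hg).
have [->|nh] := eqVneq h 0; first by rewrite class_valuation0.
by rewrite (class_valuation_in nh hh) /vlt /=; apply/class_of_leP; apply: (outside_gt0 hg).2.
Qed.

Lemma class_valuation_le g h : ~ zero_segment g -> ~ zero_segment h ->
  (le g h <-> vle (class_valuation h) (class_valuation g)).
Proof. by move=> hg hh; rewrite !class_valuation_notin //=; apply: rwP; apply: class_of_leP. Qed.

End Necessity.

Theorem mainTheorem1 (G : zmodType) (le : G -> G -> Prop)
  (hqo : quasi_order le) (htot : total_rel le) :
  (Q1 le /\ Q2 le) <->
  exists H : G -> Prop,
    is_subgroup H /\
    initial_segment le H /\
    ordered_on le H /\
    exists (d : Order.disp_t) (Gam : orderType d) (v : G -> option Gam),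
      valuation v /\
      (forall h g, H h -> ~ H g -> vlt (v g) (v h)) /\
      (forall g h, ~ H g -> ~ H h -> (le g h <-> vle (v h) (v g))).
Proof.
split=> [[q1 q2]|[H [hsub [hinit [hord [d [Gam [v [hv [hHv hcmp]]]]]]]]]].
  exists (zero_segment le); split; first exact: zero_segment_subgroup.
  split; first exact: zero_segment_initial.
  split; first exact: zero_segment_ordered.
  exists _, _, (class_valuation hqo htot); split; first exact: class_valuation_valuation.
  by split; [exact: class_valuation_lt|exact: class_valuation_le].
split; first exact: sufficient_Q1 hsub hinit hord.
exact: (sufficient_Q2 htot hsub hinit hord hv hHv hcmp).
Qed.
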